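(* Consider the discrete-time nonlinear system $x^+=AM(x)+Bu$ with (unknown) $A\in\mathbb{R}^{n\times N}$, $B\in\mathbb{R}^{n\times m}$, $M(x)=\begin{bmatrix}x\\ \mathcal{Z}(x)\end{bmatrix}\in\mathbb{R}^N$, $\mathcal{Z}:\mathbb{R}^n\to\mathbb{R}^{N-n}$, state set $X\subset\mathbb{R}^n$, initial set $X_{\mathcal I}\subset X$, unsafe set $X_{\mathcal U}\subset X$. Let $\mathcal{U}_0=[u(0),\dots,u(T-1)]$, $\mathcal{X}_1=[x(1),\dots,x(T)]$ and $\mathcal{M}_0=[M(x(0)),\dots,M(x(T-1))]\in\mathbb{R}^{N\times T}$ be built from a single trajectory $x(t+1)=AM(x(t))+Bu(t)$. Let $Q=[Q_1~Q_2]$ with $Q_1\in\mathbb{R}^{T\times n}$, $Q_2\in\mathbb{R}^{T\times(N-n)}$ and suppose $\mathcal{X}_1Q_2=\mathbf{0}_{n\times(N-n)}$. Suppose there exist a symmetric positive-definite $P\in\mathbb{R}^{n\times n}$ and $H\in\mathbb{R}^{T\times n}$ with $Q_1=HP$, and constants $\gamma,\lambda\in\mathbb{R}_{\ge0}$ with $\lambda>\gamma$, such that (i) $\mathcal{M}_0Q_2=\begin{bmatrix}\mathbf{0}_{n\times(N-n)}\\ \mathbb{I}_{N-n}\end{bmatrix}$; (ii) $\mathcal{M}_0H=\begin{bmatrix}P^{-1}\\ \mathbf{0}_{(N-n)\times n}\end{bmatrix}$; (iii) $x^\top Px\le\gamma$ for all $x\in X_{\mathcal I}$; (iv) $x^\top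 Px\ge\lambda$ for all $x\in X_{\mathcal U}$; (v) $\begin{bmatrix}P^{-1} & \mathcal{X}_1H\\ H^\top\mathcal{X}_1^\top & P^{-1}\end{bmatrix}\succeq0$. Then $\mathcal{B}(x)=x^\top Px$ is a (conventional, $k=1$) control barrier certificate and $u=\mathcal{U}_0QM(x)$ is a corresponding safety controller; that is, $\mathcal{B}\le\gamma$ on $X_{\mathcal I}$, $\mathcal{B}\ge\lambda$ on $X_{\mathcal U}$, and for all $x\in X$, with $x^+=AM(x)+B\,\mathcal{U}_0QM(x)$, $\mathcal{B}(x^+)\le\mathcal{B}(x)$.
   Context: $\mathbb{I}_{N-n}$ denotes the identity and $\mathbf{0}$ zero matrices of the indicated sizes; $\succeq0$ means positive semidefinite. A control barrier certificate (CBC) is a function $\mathcal{B}:X\to\mathbb{R}_{\ge0}$ with $\gamma,\lambda\ge0$, $\lambda>\gamma$, such that $\mathcal{B}\le\gamma$ on $X_{\mathcal I}$, $\mathcal{B}\ge\lambda$ on $X_{\mathcal U}$, and for all $x\in X$ there is an input with $\mathcal{B}(x^+)\le\mathcal{B}(x)$; a feedback realizing this is a safety controller. *)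

From HB Require Import structures.
From mathcomp Require Import all_boot all_order all_algebra.
Set Implicit Arguments. Unset Strict Implicit. Unset Printing Implicit Defensive.
Import Order.TTheory GRing.Theory Num.Theory.
Local Open Scope ring_scope.

Section Defs.
Variable R : realFieldType.

Definition qform n (S : 'M[R]_n) (v : 'cV[R]_n) : R := (v^T *m S *m v) 0 0.

Definition posdef n (S : 'M[R]_n) : Prop :=
  S^T = S /\ (forall v : 'cV[R]_n, v != 0 -> 0 < qform S v).

Definition psd n (S : 'M[R]_n) : Prop :=
  S^T = S /\ (forall v : 'cV[R]_n, 0 <= qform S v).

(* lifted state M(x) = [x; Z(x)] with N = n + k *)
Definition liftM n k (Z : 'cV[R]_n -> 'cV[R]_k) (x : 'cV[R]_n) : 'cV[R]_(n + k) :=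
  col_mx x (Z x).

Definition dataU0 m T (u : nat -> 'cV[R]_m) : 'M[R]_(m, T) :=
  \matrix_(i < m, j < T) u j i 0.
Definition dataX1 n T (x : nat -> 'cV[R]_n) : 'M[R]_(n, T) :=
  \matrix_(i < n, j < T) x j.+1 i 0.
Definition dataM0 n k T (Z : 'cV[R]_n -> 'cV[R]_k) (x : nat -> 'cV[R]_n)
  : 'M[R]_(n + k, T) :=
  \matrix_(i < n + k, j < T) liftM Z (x j) i 0.

Definition is_CBC_with_controller n m (X XI XU : 'cV[R]_n -> Prop)
  (f : 'cV[R]_n -> 'cV[R]_m -> 'cV[R]_n) (Bc : 'cV[R]_n -> R)
  (gamma lambda : R) (ctrl : 'cV[R]_n -> 'cV[R]_m) : Prop :=
  [/\ (forall x, X x -> 0 <= Bc x),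
      0 <= gamma /\ 0 <= lambda /\ gamma < lambda,
      (forall x, XI x -> Bc x <= gamma),
      (forall x, XU x -> lambda <= Bc x) &
      (forall x, X x -> Bc (f x (ctrl x)) <= Bc x)].
End Defs.

From HB Require Import structures.
From mathcomp Require Import all_boot all_order all_algebra lra.
Set Implicit Arguments. Unset Strict Implicit. Unset Printing Implicit Defensive.
Import Order.TTheory GRing.Theory Num.Theory.
Local Open Scope ring_scope.

(* The trajectory gives X1 = A M0 + B U0, and conditions (i)-(ii) say that
   [Q1 Q2] = [H P, Q2] is a right inverse of M0.  Hence the closed loop under
   u = U0 [Q1 Q2] M(x) is x+ = X1 [Q1 Q2] M(x) = G P x with G = X1 H, the
   nonlinear part being killed by X1 Q2 = 0.  Testing the LMI (v) against the
   vector [-P G P x; P x] yields (G P x)^T P (G P x) <= x^T P x, i.e. the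
   barrier decreases along the closed loop. *)

Section QuadraticForms.
Variable R : realFieldType.

Lemma qformN n (S : 'M[R]_n) v : qform S (- v) = qform S v.
Proof. by rewrite /qform (linearN (@trmx R n 1)) mulmxN !mulNmx opprK. Qed.

Lemma posdef_qform_ge0 n (P : 'M[R]_n) v : posdef P -> 0 <= qform P v.
Proof.
case=> _ Ppos; have [->|v_neq0] := eqVneq v 0; last exact/ltW/Ppos.
by rewrite /qform mulmx0 mxE.
Qed.

Lemma posdef_unitmx n (P : 'M[R]_n) : posdef P -> P \in unitmx.
Proof.
case=> _ Ppos; rewrite unitmxE unitfE; apply/det0P => -[w w_neq0 wP].
have := Ppos w^T; rewrite trmx_eq0 => /(_ w_neq0).
by rewrite /qform trmxK wP mul0mx mxE ltxx.
Qed.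

Lemma qform_block_mx p q (S11 : 'M[R]_p) (S12 : 'M_(p, q)) (S22 : 'M_q) a y :
  qform (block_mx S11 S12 S12^T S22) (col_mx a y)
  = qform S11 a + 2 * (a^T *m S12 *m y) 0 0 + qform S22 y.
Proof.
have cross : (y^T *m S12^T *m a) 0 0 = (a^T *m S12 *m y) 0 0.
  have -> : y^T *m S12^T *m a = (a^T *m S12 *m y)^T.
    by rewrite !trmx_mul trmxK mulmxA.
  by rewrite mxE.
rewrite /qform tr_col_mx mul_row_block mul_row_col !mulmxDl 2!mxE.
by rewrite [X in _ + X = _]mxE cross mulr2n mulrDl mul1r !addrA.
Qed.

Lemma qform_invmx_mul n (P : 'M[R]_n) v :
  P^T = P -> P \in unitmx -> qform (invmx P) (P *m v) = qform P v.
Proof.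
move=> PT Punit; rewrite /qform trmx_mul PT -!mulmxA (mulmxA (invmx P)).
by rewrite mulVmx // mul1mx.
Qed.

Lemma psd_block_invmx_contraction n (P G : 'M[R]_n) z :
  P^T = P -> P \in unitmx -> psd (block_mx (invmx P) G G^T (invmx P)) ->
  qform P (G *m (P *m z)) <= qform P z.
Proof.
move=> PT Punit [_ /(_ (col_mx (- (P *m (G *m (P *m z)))) (P *m z)))].
set w := G *m (P *m z).
have cross : ((- (P *m w))^T *m G *m (P *m z)) 0 0 = - qform P w.
  by rewrite (linearN (@trmx R n 1)) /= trmx_mul PT !mulNmx mxE -(mulmxA _ G).
rewrite qform_block_mx qformN !qform_invmx_mul // cross; lra.
Qed.

End QuadraticForms.

Section DataBasedClosedLoop.
Variable R : realFieldType.

Lemma dataX1_trajectory n k m T (A : 'M[R]_(n, n + k)) (B : 'M_(n, m))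
    (Z : 'cV_n -> 'cV_k) (x : nat -> 'cV_n) (u : nat -> 'cV_m) :
  (forall t, (t < T)%N -> x t.+1 = A *m liftM Z (x t) + B *m u t) ->
  dataX1 T x = A *m dataM0 T Z x + B *m dataU0 T u.
Proof.
move=> traj; apply/matrixP => i j; rewrite !mxE (traj _ (ltn_ord j)) !mxE.
by congr (_ + _); apply: eq_bigr => l _; rewrite !mxE.
Qed.

Lemma closed_loop_data n m N T (A : 'M[R]_(n, N)) (B : 'M_(n, m))
    (M0 : 'M_(N, T)) (U0 : 'M_(m, T)) (X1 : 'M_(n, T)) (K : 'M_(T, N))
    (y : 'cV_N) :
  X1 = A *m M0 + B *m U0 -> M0 *m K = 1%:M ->
  A *m y + B *m (U0 *m K *m y) = X1 *m K *m y.
Proof.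
by move=> -> M0K; rewrite -{1}[y]mul1mx -M0K !mulmxA -!mulmxDl.
Qed.

Lemma data_right_inverse n k T (M0 : 'M[R]_(n + k, T)) (P : 'M_n)
    (H : 'M_(T, n)) (Q2 : 'M_(T, k)) :
  P \in unitmx ->
  M0 *m H = col_mx (invmx P) 0 -> M0 *m Q2 = col_mx 0 1%:M ->
  M0 *m row_mx (H *m P) Q2 = 1%:M.
Proof.
move=> Punit M0H M0Q2.
rewrite mul_mx_row mulmxA M0H M0Q2 mul_col_mx mulVmx // mul0mx.
by rewrite -block_mxEh -scalar_mx_block.
Qed.

End DataBasedClosedLoop.

Theorem corollary1 (R : realFieldType) (n k m T : nat)
  (A : 'M[R]_(n, n + k)) (B : 'M[R]_(n, m)) (Z : 'cV[R]_n -> 'cV[R]_k)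
  (X XI XU : 'cV[R]_n -> Prop)
  (HXI : forall x, XI x -> X x) (HXU : forall x, XU x -> X x)
  (x : nat -> 'cV[R]_n) (u : nat -> 'cV[R]_m)
  (Htraj : forall t, (t < T)%N -> x t.+1 = A *m liftM Z (x t) + B *m u t)
  (Q1 : 'M[R]_(T, n)) (Q2 : 'M[R]_(T, k))
  (HX1Q2 : dataX1 T x *m Q2 = 0)
  (P : 'M[R]_n) (H : 'M[R]_(T, n)) (gamma lambda : R)
  (HP : posdef P) (HQ1 : Q1 = H *m P)
  (Hgamma : 0 <= gamma) (Hlambda : 0 <= lambda) (Hgl : gamma < lambda)
  (Hi : dataM0 T Z x *m Q2 = col_mx (0 : 'M[R]_(n, k)) (1%:M : 'M[R]_k))
  (Hii : dataM0 T Z x *m H = col_mx (invmx P) (0 : 'M[R]_(k, n)))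
  (Hiii : forall z, XI z -> qform P z <= gamma)
  (Hiv : forall z, XU z -> lambda <= qform P z)
  (Hv : psd (block_mx (invmx P) (dataX1 T x *m H)
                      ((dataX1 T x *m H)^T) (invmx P))) :
  is_CBC_with_controller X XI XU
    (fun z v => A *m liftM Z z + B *m v)
    (qform P) gamma lambda
    (fun z => dataU0 T u *m row_mx Q1 Q2 *m liftM Z z).
Proof.
have Punit := posdef_unitmx HP; have [PT _] := HP.
have M0K : dataM0 T Z x *m row_mx Q1 Q2 = 1%:M.
  by rewrite HQ1; exact: data_right_inverse.
have next_state z :
    A *m liftM Z z + B *m (dataU0 T u *m row_mx Q1 Q2 *m liftM Z z)
    = dataX1 T x *m H *m (P *m z).
  rewrite (closed_loop_data _ (dataX1_trajectory Htraj) M0K).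
  rewrite -mulmxA /liftM mul_row_col mulmxDr !mulmxA HX1Q2 mul0mx addr0.
  by rewrite HQ1 !mulmxA.
split=> // [z _|z _]; first exact: posdef_qform_ge0.
by rewrite next_state; exact: psd_block_invmx_contraction.
Qed.
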